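(* Let $n>m\ge 1$ and $T\ge 1$ be integers, let $0<\gamma<1$, and let $x_0,x_1,x_2,\ldots\in[-1,1]^m$. Let $\sigma:\mathbb{R}\to[-1,1]$ be a nondecreasing differentiable function, applied componentwise to vectors, with $\sup_z \sigma'(z)\le 1$. Let $H\in\mathbb{R}^{m\times n}$ be the projection onto the first $m$ coordinates. Let $(F_i,G_i)_{i\ge 0}$ be a sequence with $F_i\in\mathbb{R}^{n\times n}$, $G_i\in\mathbb{R}^{n\times(m+1)}$, and suppose that $\|F_i\|_\infty\le 1/\sqrt{\gamma}$ for all $i$. For each $i$, let $(u_0,\dots,u_T)$ be given by $u_0=0$, $u_{t+1}=\sigma(F_iu_t+G_i[x_t;1])$ for $0\le t<T$. Define $s^{(0)}_t(u)=u$, $s^{(1)}_t(u)=\sigma(F_iu+G_i[x_t;1])$ and, for $k\ge 2$, $s^{(k)}_t(u)=\sigma\big(F_i s^{(k-1)}_t(u)+G_i[Hs^{(k-1)}_t(u);1]\big)$. For $1\le t\le T$ and $k\ge1$ put $e_{t,k}=Hs^{(k)}_t(u_t)-x_{t+k}\in\mathbb{R}^m$ and $$m(k)=\prod_{j=1}^{k}\operatorname{diag}\!\big(\sigma'(s^{(j-1)}_t(u_t))\big)F_i\in\mathbb{R}^{n\times n}$$ (ordered product). For $1\le a,b,c\le n$ and $1\le d\le m+1$ and $K\in\{1,2,\dots\}\cup\{\infty\}$ set $$D^{F,K}_{ab}(i)=\sum_{t=1}^T\sum_{k=1}^{K}\gamma^k\, e_{t,k}^\top H\,[m(k)]_a\,[u_t]_b,\qquad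 D^{G,K}_{cd}(i)=\sum_{t=1}^T\sum_{k=1}^{K}\gamma^k\, e_{t,k}^\top H\,[m(k)]_c\,\big[[x_{t+k};1]\big]_d .$$ Then the series $D^{F,\infty}_{ab}(i)$ and $D^{G,\infty}_{cd}(i)$ converge, and for every $\epsilon_0>0$ there exists $K$ such that for all $i$ and all indices $a,b,c,d$, $$|D^{F,\infty}_{ab}(i)-D^{F,K}_{ab}(i)|<\epsilon_0\quad\text{and}\quad |D^{G,\infty}_{cd}(i)-D^{G,K}_{cd}(i)|<\epsilon_0 .$$
   Context: This concerns a recurrent network $u_{t+1}=\sigma(Fu_t+G[x_t;1])$ with outputs $Hu_t$; $[x;1]\in\mathbb{R}^{m+1}$ denotes $x$ with a constant $1$ appended (bias component). $D^{F,\infty}$, $D^{G,\infty}$ are the paper's expressions for the gradient of the discounted multi-step prediction cost $\sum_{t}\sum_{k\ge1}\gamma^k\|e_{t,k}\|^2$ with respect to $F$ and $G$, evaluated at $(F_i,G_i)$, and $D^{F,K}$, $D^{G,K}$ are the corresponding truncations at lookahead $K$. $[v]_b$ denotes the $b$-th component of a vector $v$, $[M]_a$ the $a$-th column of a matrix $M$, and $\operatorname{diag}(v)$ the diagonal matrix with diagonal $v$. For a matrix $A$, $\|A\|_\infty$ is the operator norm induced by the maximum norm on vectors (maximum absolute row sum). *)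

From mathcomp Require Import all_boot all_order all_algebra.
From mathcomp Require Import all_classical all_reals all_analysis.

Set Implicit Arguments.
Unset Strict Implicit.
Unset Printing Implicit Defensive.

Import Order.TTheory GRing.Theory Num.Theory.
Import numFieldNormedType.Exports.
Local Open Scope ring_scope.

Section RNN.
Context {R : realType}.

Definition mx_inf_norm (p q : nat) (A : 'M[R]_(p, q)) : R :=
  \big[Num.max/0]_(i < p) \sum_(j < q) `|A i j|.

Definition projH (m n : nat) : 'M[R]_(m, n) :=
  \matrix_(i < m, j < n) ((i : nat) == (j : nat))%:R.

Definition aug (m : nat) (v : 'cV[R]_m) : 'cV[R]_(m + 1) := col_mx v 1%:M.

Definition sigv (sigma : R -> R) (n : nat) (v : 'cV[R]_n) : 'cV[R]_n :=
  map_mx sigma v.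

Fixpoint spred (sigma : R -> R) (m n : nat) (F : 'M[R]_n) (G : 'M[R]_(n, m + 1))
    (xt : 'cV[R]_m) (k : nat) (u : 'cV[R]_n) : 'cV[R]_n :=
  match k with
  | 0 => u
  | k'.+1 =>
      let v := spred sigma F G xt k' u in
      sigv sigma (F *m v + G *m aug (if k' is 0 then xt else projH m n *m v))
  end.

Fixpoint traj (sigma : R -> R) (m n : nat) (F : 'M[R]_n) (G : 'M[R]_(n, m + 1))
    (x : nat -> 'cV[R]_m) (t : nat) : 'cV[R]_n :=
  match t with
  | 0 => 0
  | t'.+1 => sigv sigma (F *m traj sigma F G x t' + G *m aug (x t'))
  end.

Definition err (sigma : R -> R) (m n : nat) (F : 'M[R]_n) (G : 'M[R]_(n, m + 1))
    (x : nat -> 'cV[R]_m) (t k : nat) : 'cV[R]_m :=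
  projH m n *m spred sigma F G (x t) k (traj sigma F G x t) - x (t + k)%N.

Fixpoint mprod (sigma : R -> R) (m n : nat) (F : 'M[R]_n) (G : 'M[R]_(n, m + 1))
    (x : nat -> 'cV[R]_m) (t k : nat) : 'M[R]_n :=
  match k with
  | 0 => 1%:M
  | k'.+1 =>
      mprod sigma F G x t k' *m
      (diag_mx (map_mx (derive1 sigma) (spred sigma F G (x t) k' (traj sigma F G x t)))^T *m F)
  end.

Definition DF (sigma : R -> R) (m n T : nat) (gamma : R) (F : 'M[R]_n)
    (G : 'M[R]_(n, m + 1)) (x : nat -> 'cV[R]_m) (a b : 'I_n) (K : nat) : R :=
  \sum_(1 <= t < T.+1) \sum_(1 <= k < K.+1)
     gamma ^+ k * ((err sigma F G x t k)^T *m projH m n *m col a (mprod sigma F G x t k)) 0 0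
       * (traj sigma F G x t) b 0.

Definition DG (sigma : R -> R) (m n T : nat) (gamma : R) (F : 'M[R]_n)
    (G : 'M[R]_(n, m + 1)) (x : nat -> 'cV[R]_m) (c : 'I_n) (d : 'I_(m + 1)) (K : nat) : R :=
  \sum_(1 <= t < T.+1) \sum_(1 <= k < K.+1)
     gamma ^+ k * ((err sigma F G x t k)^T *m projH m n *m col c (mprod sigma F G x t k)) 0 0
       * (aug (x (t + k)%N)) d 0.

End RNN.

From mathcomp Require Import all_boot all_order all_algebra.
From mathcomp Require Import all_classical all_reals all_analysis.

Import Order.TTheory GRing.Theory Num.Theory.
Import numFieldNormedType.Exports.
Local Open Scope ring_scope.

(* Every summand of D^{F,infty} and D^{G,infty} is bounded by 2 m (sqrt gamma)^k:
   the entries of u_t, [x;1] and s^(k)_t(u_t) lie in [-1,1], so those of e_{t,k}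
   lie in [-2,2]; since 0 <= sigma' <= 1, the row sums of m(k) are at most
   ||F||_oo^k <= gamma^(-k/2), which the factor gamma^k turns into gamma^(k/2).
   Hence both double sums are dominated by a geometric series whose tail after K
   is at most 2 m T gamma^(K/2) / (1 - sqrt gamma), uniformly in i, a, b, c, d. *)

Section RowSums.
Context {R : realType}.

Lemma rowsum_le_mx_inf_norm {p q} (A : 'M[R]_(p, q)) i :
  \sum_j `|A i j| <= mx_inf_norm A.
Proof. exact: (le_bigmax _ (fun i => \sum_j `|A i j|)). Qed.

Lemma mx_inf_norm_ge0 {p q} (A : 'M[R]_(p, q)) : 0 <= mx_inf_norm A.
Proof. exact: bigmax_ge_id. Qed.

Lemma rowsum_mulmx_le p l r (A : 'M[R]_(p, l)) (B : 'M[R]_(l, r)) (al be : R) :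
  0 <= be -> (forall i, \sum_j `|A i j| <= al) -> (forall i, \sum_j `|B i j| <= be) ->
  forall i, \sum_j `|(A *m B) i j| <= al * be.
Proof.
move=> be0 hA hB i.
apply: (@le_trans _ _ (\sum_j \sum_k `|A i k| * `|B k j|)).
  apply: ler_sum => j _; rewrite mxE.
  apply: le_trans (ler_norm_sum _ _ _) _.
  by apply: ler_sum => k _; rewrite normrM.
rewrite exchange_big /=.
apply: (@le_trans _ _ (\sum_k `|A i k| * be)).
  by apply: ler_sum => k _; rewrite -mulr_sumr ler_wpM2l.
by rewrite -mulr_suml ler_wpM2r.
Qed.

Lemma rowsum_diag_mulmx_le n (d : 'rV[R]_n) (A : 'M[R]_n) i :
  (forall j, `|d 0 j| <= 1) -> \sum_j `|(diag_mx d *m A) i j| <= \sum_j `|A i j|.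
Proof.
move=> hd; apply: ler_sum => j _.
by rewrite mul_diag_mx mxE normrM ler_piMl.
Qed.

Lemma entry_le_rowsum {p q} (A : 'M[R]_(p, q)) i j : `|A i j| <= \sum_k `|A i k|.
Proof. by rewrite (bigD1 j) //= lerDl sumr_ge0. Qed.

End RowSums.

Section GeometricTails.
Context {R : realType}.
Local Open Scope classical_set_scope.

Lemma series_geometric_dominated (w : R ^nat) (C q : R) : 0 < q -> q < 1 ->
  (forall k, `|w k| <= C * q ^+ k) ->
  cvgn (series w) /\ forall K, `|limn (series w) - series w K| <= C * q ^+ K / (1 - q).
Proof.
move=> q0 q1 hw.
have C0 : 0 <= C by have := hw 0%N; rewrite expr0 mulr1; apply: le_trans.
have q1' : `|q| < 1 by rewrite ger0_norm ?ltW.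
have cw : cvgn (series w).
  apply: normed_cvg; apply: (@series_le_cvg _ (fun k => `|w k|) (geometric C q)) => //.
  - by move=> k; exact: geometric_ge0 C0 (ltW q0).
  - exact: is_cvg_geometric_series.
split => // K.
have hc : (fun N => `|series w N - series w K|) @ \oo --> `|limn (series w) - series w K|.
  by apply: cvg_norm; apply: cvgB => //; exact: cvg_cst.
rewrite -(cvg_lim _ hc) //; apply: limr_le; first by apply/cvg_ex; eexists; exact: hc.
near=> N.
have KN : (K <= N)%N by near: N; exists K.
rewrite sub_series_geq //; apply: le_trans (ler_norm_sum _ _ _) _.
apply: (@le_trans _ _ (\sum_(K <= k < N) C * q ^+ k)); first by apply: ler_sum => k _.
rewrite -mulr_sumr -mulrA ler_wpM2l // -(subnKC KN) geometric_partial_tail.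
exact: geometric_le_lim (exprn_ge0 _ (ltW q0)) q0 q1'.
Unshelve. all: by end_near.
Qed.

Lemma double_series_geometric_dominated (T : nat) (g : nat -> nat -> R) (B q : R)
    (S : R ^nat) :
  0 < q -> q < 1 -> 0 <= B ->
  (forall t k, (0 < t)%N -> (0 < k)%N -> `|g t k| <= B * q ^+ k) ->
  (forall K, S K = \sum_(1 <= t < T.+1) \sum_(1 <= k < K.+1) g t k) ->
  cvgn S /\ forall K, `|limn S - S K| <= T%:R * B * q ^+ K / (1 - q).
Proof.
move=> q0 q1 B0 hg hS.
have -> : S = series (fun k => \sum_(1 <= t < T.+1) g t k.+1).
  by apply/funext => K; rewrite hS exchange_big_nat /= big_add1 seriesEnat.
apply: series_geometric_dominated => // k.
apply: le_trans (ler_norm_sum _ _ _) _.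
apply: (@le_trans _ _ (\sum_(1 <= t < T.+1) B * q ^+ k)).
  apply: ler_sum_nat => t /andP[t1 _]; apply: le_trans (hg t k.+1 t1 isT) _.
  by rewrite ler_wpM2l // exprS ler_piMl ?exprn_ge0 ?ltW.
by rewrite sumr_const_nat subn1 /= -mulrA mulr_natl.
Qed.

Lemma exists_geometric_tail_lt (C : R) {q eps : R} : 0 < q -> q < 1 -> 0 < eps ->
  exists K : nat, (0 < K)%N /\ C * q ^+ K / (1 - q) < eps.
Proof.
move=> q0 q1 eps0.
have q1' : `|q| < 1 by rewrite ger0_norm ?ltW.
have /cvgrPdist_lt /(_ eps eps0) [N _ HN] := cvg_geometric (C / (1 - q)) q1'.
exists N.+1; split => //.
have := HN N.+1 (leqnSn N); rewrite sub0r normrN /= mulrAC.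
exact: le_lt_trans (ler_norm _).
Qed.

Lemma nondecreasing_derive1_ge0 {f : R -> R} {x : R} :
  derivable f x 1 -> {homo f : y z / y <= z} -> 0 <= derive1 f x.
Proof.
move=> df incrf; apply: limr_ge.
  by under eq_fun do rewrite -[X in X + x]scaler1; exact: df.
near=> h.
have : h != 0 by near: h; exact: nbhs_dnbhs_neq.
rewrite neq_lt => /orP[h0|h0] /=.
- by rewrite nmulr_rge0 ?invr_lt0 // subr_le0 incrf // gerDr ltW.
- by rewrite pmulr_rge0 ?invr_gt0 // subr_ge0 incrf // lerDr ltW.
Unshelve. end_near. Qed.

End GeometricTails.

Section RNNBounds.
Context {R : realType} {sigma : R -> R} {m n : nat} {F : 'M[R]_n}
  {G : 'M[R]_(n, m + 1)} {x : nat -> 'cV[R]_m}.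
Hypothesis m_le_n : (m <= n)%N.
Hypothesis sigma_bounded : forall z, -1 <= sigma z <= 1.
Hypothesis x_bounded : forall t (j : 'I_m), -1 <= x t j 0 <= 1.

Lemma sigv_entry_le1 p (v : 'cV[R]_p) i : `|sigv sigma v i 0| <= 1.
Proof. by rewrite mxE ler_norml. Qed.

Lemma traj_entry_le1 t b : `|traj sigma F G x t b 0| <= 1.
Proof. by case: t => [|t] /=; rewrite ?sigv_entry_le1 // mxE normr0. Qed.

Lemma spred_traj_entry_le1 t k b :
  `|spred sigma F G (x t) k (traj sigma F G x t) b 0| <= 1.
Proof. by case: k => [|k] /=; rewrite ?traj_entry_le1 ?sigv_entry_le1. Qed.

Lemma aug_x_entry_le1 t d : `|aug (x t) d 0| <= 1.
Proof.
rewrite /aug; case: (splitP d) => j hj.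
  by rewrite (_ : d = lshift 1 j) ?col_mxEu ?ler_norml //; apply: val_inj.
rewrite (_ : d = rshift m j) ?col_mxEd; last by apply: val_inj.
by rewrite mxE; case: (_ == _); rewrite ?normr1 ?normr0.
Qed.

Lemma projH_mulmx (v : 'cV[R]_n) j : (projH m n *m v) j 0 = v (widen_ord m_le_n j) 0.
Proof.
rewrite mxE (bigD1 (widen_ord m_le_n j)) //= mxE eqxx mul1r big1 ?addr0 // => l hl.
rewrite mxE; case: eqP => [hjl|]; last by rewrite mul0r.
by move: hl; rewrite (_ : l = widen_ord m_le_n j) ?eqxx //; apply: val_inj.
Qed.

Lemma err_entry_le2 t k j : `|err sigma F G x t k j 0| <= 2.
Proof.
rewrite /err mxE [in X in _ + X]mxE projH_mulmx; apply: le_trans (ler_normB _ _) _.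
by rewrite -[2]/(1 + 1 : R) lerD ?spred_traj_entry_le1 ?ler_norml.
Qed.

Lemma projH_bilinear_le (e : 'cV[R]_m) (c : 'cV[R]_n) (al be : R) :
  (forall j, `|e j 0| <= al) -> (forall l, `|c l 0| <= be) ->
  `|(e^T *m projH m n *m c) 0 0| <= m%:R * (al * be).
Proof.
move=> he hc; rewrite -mulmxA mxE; apply: le_trans (ler_norm_sum _ _ _) _.
apply: (@le_trans _ _ (\sum_(j < m) al * be)); last by rewrite sumr_const card_ord mulr_natl.
apply: ler_sum => j _; rewrite normrM mxE projH_mulmx.
by apply: ler_pM => //; apply: le_trans (normr_ge0 _) (hc _).
Qed.

Hypothesis derive_ge0 : forall z, 0 <= derive1 sigma z.
Hypothesis derive_le1 : forall z, derive1 sigma z <= 1.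

Lemma mprod_rowsum_le (r : R) : mx_inf_norm F <= r ->
  forall t k i, \sum_j `|mprod sigma F G x t k i j| <= r ^+ k.
Proof.
move=> hF t; elim => [|k IH] i /=.
  rewrite (bigD1 i) //= mxE eqxx normr1 big1 ?addr0 // => j hj.
  by rewrite mxE eq_sym (negbTE hj) normr0.
rewrite exprSr; apply: rowsum_mulmx_le => // [|l].
  exact: le_trans (mx_inf_norm_ge0 F) hF.
apply: le_trans (le_trans (rowsum_le_mx_inf_norm F l) hF).
apply: rowsum_diag_mulmx_le => j.
by rewrite !mxE ger0_norm.
Qed.

Context {gamma q : R}.
Hypotheses (q_gt0 : 0 < q) (q_lt1 : q < 1) (gamma_sq : gamma = q ^+ 2).
Hypothesis F_norm : mx_inf_norm F <= 1 / q.

Lemma grad_weight_le t k a :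
  `|gamma ^+ k * ((err sigma F G x t k)^T *m projH m n *m col a (mprod sigma F G x t k)) 0 0|
   <= m%:R * 2 * q ^+ k.
Proof.
have gammaK : gamma ^+ k * (1 / q) ^+ k = q ^+ k.
  by rewrite -exprMn gamma_sq expr2 mul1r mulrK // unitfE gt_eqF.
have gamma_ge0 : 0 <= gamma by rewrite gamma_sq sqr_ge0.
rewrite normrM ger0_norm ?exprn_ge0 // -gammaK mulrCA ler_wpM2l ?exprn_ge0 // -mulrA.
apply: projH_bilinear_le => [j|l]; first exact: err_entry_le2.
rewrite mxE; apply: le_trans (entry_le_rowsum _ l a) _.
exact: mprod_rowsum_le.
Qed.

Lemma DF_tail_le T a b :
  cvgn (DF sigma T gamma F G x a b) /\
  forall K, `|limn (DF sigma T gamma F G x a b) - DF sigma T gamma F G x a b K|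
            <= T%:R * (m%:R * 2) * q ^+ K / (1 - q).
Proof.
apply: double_series_geometric_dominated => // t k _ _.
rewrite normrM -[_ * q ^+ k]mulr1.
by apply: ler_pM; rewrite ?normr_ge0 ?grad_weight_le ?traj_entry_le1.
Qed.

Lemma DG_tail_le T c d :
  cvgn (DG sigma T gamma F G x c d) /\
  forall K, `|limn (DG sigma T gamma F G x c d) - DG sigma T gamma F G x c d K|
            <= T%:R * (m%:R * 2) * q ^+ K / (1 - q).
Proof.
apply: double_series_geometric_dominated => // t k _ _.
rewrite normrM -[_ * q ^+ k]mulr1.
by apply: ler_pM; rewrite ?normr_ge0 ?grad_weight_le ?aug_x_entry_le1.
Qed.

End RNNBounds.

Theorem lemma1 (R : realType) (n m T : nat) (gamma : R)
  (x : nat -> 'cV[R]_m) (sigma : R -> R)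
  (F : nat -> 'M[R]_n) (G : nat -> 'M[R]_(n, m + 1)) :
  (0 < m)%N -> (m < n)%N -> (0 < T)%N ->
  0 < gamma -> gamma < 1 ->
  (forall t (j : 'I_m), -1 <= x t j 0 <= 1) ->
  (forall z, -1 <= sigma z <= 1) ->
  {homo sigma : y z / y <= z} ->
  (forall z, derivable sigma z 1) ->
  (forall z, derive1 sigma z <= 1) ->
  (forall i, mx_inf_norm (F i) <= 1 / Num.sqrt gamma) ->
  (forall i (a b : 'I_n), cvgn (DF sigma T gamma (F i) (G i) x a b)) /\
  (forall i (c : 'I_n) (d : 'I_(m + 1)), cvgn (DG sigma T gamma (F i) (G i) x c d)) /\
  (forall eps0 : R, 0 < eps0 ->
     exists K : nat, (0 < K)%N /\
       forall i (a b c : 'I_n) (d : 'I_(m + 1)),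
         `|limn (DF sigma T gamma (F i) (G i) x a b) - DF sigma T gamma (F i) (G i) x a b K| < eps0 /\
         `|limn (DG sigma T gamma (F i) (G i) x c d) - DG sigma T gamma (F i) (G i) x c d K| < eps0).
Proof.
move=> _ /ltnW mn _ g0 g1 hx hs hmono hder hd1 hF.
have q0 : 0 < Num.sqrt gamma by rewrite sqrtr_gt0.
have q1 : Num.sqrt gamma < 1 by rewrite -sqrtr1 ltr_sqrt.
have gq : gamma = Num.sqrt gamma ^+ 2 by rewrite sqr_sqrtr // ltW.
have hd0 z : 0 <= derive1 sigma z := nondecreasing_derive1_ge0 (hder z) hmono.
have DF_tail i a b := DF_tail_le (G := G i) mn hs hx hd0 hd1 q0 q1 gq (hF i) T a b.
have DG_tail i c d := DG_tail_le (G := G i) mn hs hx hd0 hd1 q0 q1 gq (hF i) T c d.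
split; first by move=> i a b; case: (DF_tail i a b).
split; first by move=> i c d; case: (DG_tail i c d).
move=> eps eps0.
have [K [K0 HK]] := exists_geometric_tail_lt (T%:R * (m%:R * 2)) q0 q1 eps0.
exists K; split => // i a b c d; split.
- by apply: le_lt_trans HK; case: (DF_tail i a b).
- by apply: le_lt_trans HK; case: (DG_tail i c d).
Qed.
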